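(* Let $\mu,\mu',\nu$ be subdistributions over closed nondeterministic expressions and $\alpha$ an action such that $\nu\simeq\mu$ (lifted weak congruence) and $\mu\xrightarrow{\alpha}\mu'$ (combined transition). Then there exists $\nu'$ such that $\nu\xRightarrow{\alpha}\nu'$ and $\nu'\approx\mu'$.
   Context: Fix a set $\mathsf{Act}$ of actions containing $\tau$. Nondeterministic expressions: $E ::= 0 \mid X \mid \alpha.P \mid \mathrm{rec}\,X.E \mid E + E$; probabilistic expressions: $P ::= \partial(E) \mid P \oplus_p P$ ($0<p<1$); closed means no free variables. Subdistributions $\mu$ over $S$: $\mu:S\to\mathbb R_{\ge0}$, $|\mu|\le1$; $\delta_s$ Dirac. Semantics: least relations with $\partial(E)\mapsto\delta_E$; $P\oplus_pQ\mapsto p\mu+(1-p)\nu$ if $P\mapsto\mu,Q\mapsto\nu$; $\alpha.P\xrightarrow{\alpha}\mu$ if $P\mapsto\mu$; $\mathrm{rec}\,X.E\xrightarrow{\alpha}\mu$ if $E[\mathrm{rec}\,X.E/X]\xrightarrow{\alpha}\mu$; $E+F\xrightarrow{\alpha}\mu$ and $F+E\xrightarrow{\alpha}\mu$ if $E\xrightarrow{\alpha}\mu$. Combined transitions on subdistributions: least relation with $\delta_E\xrightarrow{\alpha}\mu$ if $E\xrightarrow{\alpha}\mu$, closed under $\sum p_i\nu_i\xrightarrow{\alpha}\sum p_i\mu_i$ ($\nu_i\xrightarrow{\alpha}\mu_i$, $p_i\ge0$, $\sum p_i\le1$). A derivation is $(\mu_i^{\to},\mu_i^{\times})_{i\in\mathbb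 N}$ with $\mu_i^{\to}\xrightarrow{\tau}\mu^{\to}_{i+1}+\mu^{\times}_{i+1}$; $\mu\Rightarrow\nu$ iff a derivation has $\mu=\mu_0^{\to}+\mu_0^{\times}$, $\nu=\sum_i\mu_i^\times$. $\mu\xRightarrow{\alpha}\nu$ iff $\mu\Rightarrow\xrightarrow{\alpha}\Rightarrow\nu$; $\xRightarrow{\hat\alpha}$ is $\Rightarrow$ for $\alpha=\tau$ and $\xRightarrow{\alpha}$ otherwise. Lifting of a relation $\mathcal R$ on expressions to subdistributions: least relation with $\delta_E\mathcal R\delta_F$ for $E\mathcal RF$, closed under $\sum p_i\mu_i\mathcal R\sum p_i\nu_i$ ($\mu_i\mathcal R\nu_i$, $p_i\ge0$, $\sum p_i\le1$). Weak bisimulation: relation $\mathcal R$ on closed expressions such that if $E\mathcal RF$ and $E\xrightarrow{\alpha}\mu$ then $F\xRightarrow{\hat\alpha}\nu$ with $\mu\mathcal R\nu$, and symmetrically; $\approx$ is weak bisimilarity. Closed $E,F$ are weakly congruent, $E\simeq F$, iff $E\xrightarrow{\alpha}\mu$ implies $F\xRightarrow{\alpha}\nu$ with $\mu\approx\nu$, and $F\xrightarrow{\alpha}\nu$ implies $E\xRightarrow{\alpha}\mu$ with $\mu\approx\nu$. *)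

From Stdlib Require Import Reals List ClassicalEpsilon.
Import ListNotations.
Open Scope R_scope.

Set Implicit Arguments.

Inductive nexp (A : Type) : Type :=
  | NNil : nexp A
  | NVar : nat -> nexp A
  | NPre : A -> pexp A -> nexp A
  | NRec : nat -> nexp A -> nexp A
  | NSum : nexp A -> nexp A -> nexp A
with pexp (A : Type) : Type :=
  | PDelta : nexp A -> pexp A
  | PChoice : forall p : R, 0 < p < 1 -> pexp A -> pexp A -> pexp A.

Arguments NNil {A}.
Arguments NVar {A} _.
Arguments PChoice {A} p _ _ _.

Fixpoint nfree {A : Type} (x : nat) (E : nexp A) : Prop :=
  match E with
  | NNil => False
  | NVar y => x = y
  | NPre _ P => pfree x P
  | NRec y E' => x <> y /\ nfree x E'
  | NSum E1 E2 => nfree x E1 \/ nfree x E2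
  end
with pfree {A : Type} (x : nat) (P : pexp A) : Prop :=
  match P with
  | PDelta E => nfree x E
  | PChoice _ _ P1 P2 => pfree x P1 \/ pfree x P2
  end.

Definition closed {A : Type} (E : nexp A) : Prop := forall x, ~ nfree x E.

(* substitution E[G/x]; only ever used with G closed, so no capture issue *)
Fixpoint nsubst {A : Type} (x : nat) (G : nexp A) (E : nexp A) : nexp A :=
  match E with
  | NNil => NNil
  | NVar y => if Nat.eqb x y then G else NVar y
  | NPre a P => NPre a (psubst x G P)
  | NRec y E' => if Nat.eqb x y then NRec y E' else NRec y (nsubst x G E')
  | NSum E1 E2 => NSum (nsubst x G E1) (nsubst x G E2)
  end
with psubst {A : Type} (x : nat) (G : nexp A) (P : pexp A) : pexp A :=
  match P with
  | PDelta E => PDelta (nsubst x G E)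
  | PChoice p hp P1 P2 => PChoice p hp (psubst x G P1) (psubst x G P2)
  end.

Definition subd (A : Type) := nexp A -> R.

Fixpoint lsum {A : Type} (mu : subd A) (l : list (nexp A)) : R :=
  match l with [] => 0 | E :: l' => mu E + lsum mu l' end.

(* mu : S -> R_{>=0} with |mu| <= 1 (total mass over the countable set of
   expressions: every finite partial sum is at most 1) *)
Definition is_subd {A : Type} (mu : subd A) : Prop :=
  (forall E, 0 <= mu E) /\ (forall l, NoDup l -> lsum mu l <= 1).

Definition subdS {A : Type} (mu : subd A) : Prop :=
  is_subd mu /\ (forall E, mu E <> 0 -> closed E).

Definition dirac {A : Type} (E : nexp A) : subd A :=
  fun F => if excluded_middle_informative (E = F) then 1 else 0.

Definition sadd {A : Type} (mu nu : subd A) : subd A := fun E => mu E + nu E.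
Definition sscale {A : Type} (p : R) (mu : subd A) : subd A := fun E => p * mu E.

Definition weights (p : nat -> R) : Prop :=
  (forall i, 0 <= p i) /\ (forall n, sum_f_R0 p n <= 1).

Definition is_comb {A : Type} (p : nat -> R) (mus : nat -> subd A) (mu0 : subd A) : Prop :=
  forall E, infinite_sum (fun i => p i * mus i E) (mu0 E).

Inductive pstep {A : Type} : pexp A -> subd A -> Prop :=
  | ps_delta : forall E, pstep (PDelta E) (dirac E)
  | ps_choice : forall p hp P Q mu nu,
      pstep P mu -> pstep Q nu ->
      pstep (PChoice p hp P Q) (sadd (sscale p mu) (sscale (1 - p) nu)).

Inductive nstep {A : Type} : nexp A -> A -> subd A -> Prop :=
  | ns_pre : forall a P mu, pstep P mu -> nstep (NPre a P) a mu
  | ns_rec : forall x E a mu,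
      nstep (nsubst x (NRec x E) E) a mu -> nstep (NRec x E) a mu
  | ns_suml : forall E F a mu, nstep E a mu -> nstep (NSum E F) a mu
  | ns_sumr : forall E F a mu, nstep E a mu -> nstep (NSum F E) a mu.

(* combined transitions on subdistributions over closed expressions;
   families are countable (indexed by nat; zero-weight members are irrelevant) *)
Inductive cstep {A : Type} : subd A -> A -> subd A -> Prop :=
  | cs_dirac : forall E a mu, closed E -> nstep E a mu -> cstep (dirac E) a mu
  | cs_comb : forall a (p : nat -> R) (nus mus : nat -> subd A) nu0 mu0,
      weights p ->
      (forall i, 0 < p i -> cstep (nus i) a (mus i)) ->
      is_comb p nus nu0 -> is_comb p mus mu0 ->
      cstep nu0 a mu0.

Definition wtr {A : Type} (tau : A) (mu nu : subd A) : Prop :=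
  exists (mto mx : nat -> subd A),
    (forall i, subdS (mto i) /\ subdS (mx i)) /\
    (forall i, cstep (mto i) tau (sadd (mto (S i)) (mx (S i)))) /\
    mu = sadd (mto 0%nat) (mx 0%nat) /\
    (forall E, infinite_sum (fun i => mx i E) (nu E)).

Definition wtra {A : Type} (tau : A) (mu : subd A) (a : A) (nu : subd A) : Prop :=
  exists mu1 mu2, wtr tau mu mu1 /\ cstep mu1 a mu2 /\ wtr tau mu2 nu.

Definition wtrhat {A : Type} (tau : A) (mu : subd A) (a : A) (nu : subd A) : Prop :=
  (a = tau /\ wtr tau mu nu) \/ (a <> tau /\ wtra tau mu a nu).

Inductive lift {A : Type} (Rel : nexp A -> nexp A -> Prop) : subd A -> subd A -> Prop :=
  | l_dirac : forall E F, Rel E F -> lift Rel (dirac E) (dirac F)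
  | l_comb : forall (p : nat -> R) (mus nus : nat -> subd A) mu0 nu0,
      weights p ->
      (forall i, 0 < p i -> lift Rel (mus i) (nus i)) ->
      is_comb p mus mu0 -> is_comb p nus nu0 ->
      lift Rel mu0 nu0.

Definition weak_bisim {A : Type} (tau : A) (Rel : nexp A -> nexp A -> Prop) : Prop :=
  (forall E F, Rel E F -> closed E /\ closed F) /\
  (forall E F a mu, Rel E F -> nstep E a mu ->
     exists nu, wtrhat tau (dirac F) a nu /\ lift Rel mu nu) /\
  (forall E F a nu, Rel E F -> nstep F a nu ->
     exists mu, wtrhat tau (dirac E) a mu /\ lift Rel mu nu).

Definition wbis {A : Type} (tau : A) (E F : nexp A) : Prop :=
  exists Rel, weak_bisim tau Rel /\ Rel E F.

Definition wcong {A : Type} (tau : A) (E F : nexp A) : Prop :=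
  closed E /\ closed F /\
  (forall a mu, nstep E a mu ->
     exists nu, wtra tau (dirac F) a nu /\ lift (wbis tau) mu nu) /\
  (forall a nu, nstep F a nu ->
     exists mu, wtra tau (dirac E) a mu /\ lift (wbis tau) mu nu).

(* Both hypotheses flatten into single countable mixtures of atoms:
   [nu = Σ_k w_k δ(F_k)] and [mu = Σ_k w_k δ(E_k)] with [F_k ≃ E_k], and
   [mu = Σ_j q_j δ(G_j)], [mu' = Σ_j q_j ρ_j] with [G_j --α--> ρ_j].
   The two decompositions of [mu] are coupled by
   [c_kj = w_k q_j [E_k = G_j] / mu(E_k)], whose marginals are [w] and [q].
   On each pair with [c_kj > 0], weak congruence of [F_k] and [E_k = G_j] gives
   [δ(F_k) ==α==> ν_kj ≈ ρ_j]; weak transitions and lifting are preserved by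
   countable mixtures, so [nu' = Σ_kj c_kj ν_kj] works.  Double series are
   handled as series of nonnegative extended reals, where Fubini's theorem and
   reindexing along Cantor's pairing of [nat * nat] with [nat] are available. *)

From Pilot Require Import Defs.
From Stdlib Require Import Reals Lra Cantor ClassicalEpsilon.
From mathcomp Require Import all_boot all_order all_algebra.
From mathcomp Require Import boolp classical_sets reals ereal topology normedtype.
From mathcomp Require Import sequences esum Rstruct Rstruct_topology.
Import Order.TTheory GRing.Theory Num.Theory numFieldNormedType.Exports.
Import Pilot.Defs.
Local Open Scope classical_set_scope.
Local Open Scope R_scope.

Definition ser (a : nat -> R) : \bar R := (\sum_(i <oo) (a i)%:E)%E.

Definition uncurry_nat {T : Type} (f : nat -> nat -> T) (n : nat) : T :=
  f (Cantor.of_nat n).1 (Cantor.of_nat n).2.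

Lemma mul_ge0_pos (c y : R) : 0 <= c -> (0 < c -> 0 <= y) -> 0 <= c * y.
Proof.
by case/Rle_lt_or_eq_dec => [hc /(_ hc)|<- _]; [apply: Rmult_le_pos; lra|lra].
Qed.

Lemma sum_f_R0_big (a : nat -> R) n : sum_f_R0 a n = (\sum_(0 <= i < n.+1) a i)%R.
Proof. by elim: n => [|n IH] /=; [rewrite big_nat1|rewrite big_nat_recr //= IH]. Qed.

Lemma Un_cv_cvgn (u : nat -> R) l : Un_cv u l <-> u @ \oo --> l.
Proof.
split=> [H|/(@cvgrPdist_lt _ R^o) H].
- apply/(@cvgrPdist_lt _ R^o) => e /RltP /H [N HN]; exists N => // n /= /ssrnat.leP.
  by move/HN; rewrite /R_dist Rabs_minus_sym => /RltP.
- move=> e /RltP /H [N _ HN]; exists N => n /ssrnat.leP /HN /RltP.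
  by rewrite /R_dist Rabs_minus_sym.
Qed.

Lemma fine_partial_sums (a : nat -> R) :
  fine \o (fun n => \sum_(0 <= i < n) (a i)%:E)%E = (fun n => \sum_(0 <= i < n) a i)%R.
Proof. by apply/funext => n /=; rewrite sumEFin. Qed.

Lemma ser_infinite_sum {a : nat -> R} {l} : infinite_sum a l -> ser a = l%:E.
Proof.
move=> H; apply: cvg_lim => //; apply/fine_cvgP; split.
  by apply: nearW => n; rewrite sumEFin.
rewrite fine_partial_sums -cvg_shiftS /=.
by apply/Un_cv_cvgn; under eq_fun do rewrite -sum_f_R0_big.
Qed.

Lemma infinite_sum_ser (a : nat -> R) l :
  (forall n, 0 <= a n) -> ser a = l%:E -> infinite_sum a l.
Proof.
move=> a0 H.
have : (fun n => \sum_(0 <= i < n) (a i)%:E)%E @ \oo --> l%:E.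
  by rewrite -H; apply: is_cvg_nneseries => n _ _; rewrite lee_fin; apply/RleP.
case/fine_cvgP => _; rewrite fine_partial_sums -cvg_shiftS /=.
by under eq_fun do rewrite -sum_f_R0_big; move/Un_cv_cvgn.
Qed.

Lemma ser_ge0 {a : nat -> R} : (forall n, 0 <= a n) -> (0 <= ser a)%E.
Proof. by move=> a0; apply: nneseries_ge0 => n _ _; rewrite lee_fin; apply/RleP. Qed.

Lemma ser_le {a b : nat -> R} :
  (forall n, 0 <= a n) -> (forall n, a n <= b n) -> (ser a <= ser b)%E.
Proof.
by move=> a0 ab; apply: lee_nneseries => n *; rewrite lee_fin; apply/RleP.
Qed.

Lemma eq_ser {a b : nat -> R} : (forall n, a n = b n) -> ser a = ser b.
Proof. by move=> h; apply/congr_lim/funext => n; apply: eq_bigr => i _; rewrite h. Qed.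

Lemma serZ (c : R) (a : nat -> R) :
  (forall n, 0 <= a n) -> ser (fun n => c * a n) = (c%:E * ser a)%E.
Proof.
move=> a0; rewrite /ser -nneseriesZl; last by move=> i _; rewrite lee_fin; apply/RleP.
by apply/congr_lim/funext => n; apply: eq_bigr => i _; rewrite EFinM.
Qed.

Lemma serD (a b : nat -> R) : (forall n, 0 <= a n) -> (forall n, 0 <= b n) ->
  ser (fun n => a n + b n) = (ser a + ser b)%E.
Proof.
move=> a0 b0; rewrite /ser -nneseriesD => [|i _ _|i _ _]; last 2 first.
- by rewrite lee_fin; apply/RleP.
- by rewrite lee_fin; apply/RleP.
by apply/congr_lim/funext => n; apply: eq_bigr => i _; rewrite EFinD.
Qed.

Lemma ser0 (a : nat -> R) : (forall n, a n = 0) -> ser a = 0%E.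
Proof. by move=> h; rewrite (@eq_ser _ (fun=> 0) h) // /ser eseries0. Qed.

Lemma ser_single (x : R) (a : nat -> R) :
  a 0%nat = x -> (forall n, a (S n) = 0) -> ser a = x%:E.
Proof.
move=> h0 hS; apply: ser_infinite_sum => e e0; exists 0%nat => n _.
have -> : sum_f_R0 a n = x by elim: n => [|n IH] //=; rewrite IH hS Rplus_0_r.
by rewrite /R_dist Rminus_diag Rabs_R0.
Qed.

Lemma ser_term_le {a : nat -> R} k : (forall n, 0 <= a n) -> ((a k)%:E <= ser a)%E.
Proof.
move=> a0; apply: (@le_trans _ _ (\sum_(0 <= i < k.+1) (a i)%:E)%E).
  by rewrite big_nat_recr //= leeDr //; apply: sume_ge0 => i _; rewrite lee_fin; apply/RleP.
by apply: nneseries_lim_ge => i _ _; rewrite lee_fin; apply/RleP.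
Qed.

Lemma ser_pos {a : nat -> R} {s} k :
  (forall n, 0 <= a n) -> ser a = s%:E -> 0 < a k -> 0 < s.
Proof.
by move=> a0 hs; have := ser_term_le k a0; rewrite hs lee_fin => /RleP; lra.
Qed.

Lemma ser_neq0 (a : nat -> R) : ser a <> 0%E -> exists k, a k <> 0.
Proof.
move=> h; apply: contrapT => hn; apply/h/ser0 => n.
by apply: contrapT => hk; apply: hn; exists n.
Qed.

Lemma ser_fineK (a : nat -> R) :
  (forall n, 0 <= a n) -> (ser a <= 1%:E)%E -> ser a = (fine (ser a))%:E.
Proof.
move=> a0 a1; rewrite fineK // ge0_fin_numE; last exact: ser_ge0.
exact: le_lt_trans a1 (ltry _).
Qed.

Lemma weightsP (p : nat -> R) :
  weights p <-> (forall i, 0 <= p i) /\ (ser p <= 1%:E)%E.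
Proof.
split=> -[p0 p1]; split=> //.
- apply: lime_le; first by apply: is_cvg_nneseries => n _ _; rewrite lee_fin; apply/RleP.
  apply: nearW => -[|n]; first by rewrite big_geq // lee_fin; apply/RleP; lra.
  by rewrite sumEFin -sum_f_R0_big lee_fin; apply/RleP.
- move=> n; have : ((\sum_(0 <= i < n.+1) p i)%R%:E <= ser p)%E.
    by rewrite -sumEFin; apply: nneseries_lim_ge => i _ _; rewrite lee_fin; apply/RleP.
  by move/le_trans/(_ p1); rewrite lee_fin sum_f_R0_big => /RleP.
Qed.

Lemma ser_interchange (f : nat -> nat -> R) : (forall i j, 0 <= f i j) ->
  (\sum_(i <oo) ser (f i) = \sum_(j <oo) ser (fun i => f i j))%E.
Proof.
by move=> f0; apply: nneseries_interchange => i j; rewrite lee_fin; apply/RleP.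
Qed.

Lemma ser_uncurry (f : nat -> nat -> R) : (forall i j, 0 <= f i j) ->
  ser (uncurry_nat f) = (\sum_(i <oo) ser (f i))%E.
Proof.
move=> f0.
have f0' i j : (0 <= (f i j)%:E)%E by rewrite lee_fin; apply/RleP.
rewrite /ser nneseries_esumT => [|n]; last exact: f0'.
rewrite nneseries_esumT => [|n]; last by apply: nneseries_ge0.
under [X in _ = X]eq_esum => i _ do rewrite nneseries_esumT //.
rewrite (@esum_esum R nat nat setT (fun _ => setT) (fun i j => (f i j)%:E)) //.
rewrite (reindex_esum [set: nat] (setT `*`` (fun _ => setT)) Cantor.of_nat
  (fun p => (f p.1 p.2)%:E)) //.
split=> [n _ //|m n _ _ h|[i j] _].
- by rewrite -(Cantor.cancel_to_of m) -(Cantor.cancel_to_of n) h.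
- by exists (Cantor.to_nat (i, j)); rewrite // Cantor.cancel_of_to.
Qed.

Lemma eseries_ser {g : nat -> \bar R} {s : nat -> R} :
  (forall i, g i = (s i)%:E) -> (\sum_(i <oo) g i)%E = ser s.
Proof. by move=> h; apply/congr_lim/funext => n; apply: eq_bigr => i _; rewrite h. Qed.

Lemma ser_uncurry_rows {f : nat -> nat -> R} {s : nat -> R} :
  (forall i j, 0 <= f i j) -> (forall i, ser (f i) = (s i)%:E) ->
  ser (uncurry_nat f) = ser s.
Proof. by move=> f0 hs; rewrite ser_uncurry // (eseries_ser hs). Qed.

Lemma ser_uncurry_cols {f : nat -> nat -> R} {s : nat -> R} :
  (forall i j, 0 <= f i j) -> (forall j, ser (fun i => f i j) = (s j)%:E) ->
  ser (uncurry_nat f) = ser s.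
Proof.
by move=> f0 hs; rewrite ser_uncurry // ser_interchange // (eseries_ser hs).
Qed.

Lemma ser_uncurry_le (f : nat -> nat -> R) (s : nat -> R) :
  (forall i j, 0 <= f i j) -> (forall i, 0 <= s i) ->
  (forall i, (ser (f i) <= (s i)%:E)%E) -> (ser (uncurry_nat f) <= ser s)%E.
Proof.
move=> f0 s0 hs; rewrite ser_uncurry //; apply: lee_nneseries => [i _ _|i _].
- exact: ser_ge0.
- exact: hs.
Qed.

Section Mixtures.

Context {A : Type}.
Implicit Types (w q : nat -> R) (f g : nat -> subd A) (x y z : subd A).

Lemma dirac_refl (E : nexp A) : dirac E E = 1.
Proof. by rewrite /dirac; case: excluded_middle_informative. Qed.

Lemma dirac_neq (E F : nexp A) : E <> F -> dirac E F = 0.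
Proof. by rewrite /dirac; case: excluded_middle_informative. Qed.

Lemma dirac_ge0 (E F : nexp A) : 0 <= dirac E F.
Proof. by rewrite /dirac; case: excluded_middle_informative => _; lra. Qed.

Lemma lsum_ge0 x l : (forall E, 0 <= x E) -> 0 <= lsum x l.
Proof. by move=> h; elim: l => [|E l IH] /=; [lra|have := h E; lra]. Qed.

Lemma lsumZ x c l : lsum (fun E => c * x E) l = c * lsum x l.
Proof. by elim: l => [|E l IH] /=; [ring|rewrite IH; ring]. Qed.

Lemma lsumD x y l : lsum (sadd x y) l = lsum x l + lsum y l.
Proof. by elim: l => [|E l IH] /=; [ring|rewrite IH /sadd; ring]. Qed.

Lemma lsum_dirac_notin (F : nexp A) l : ~ List.In F l -> lsum (dirac F) l = 0.
Proof.
elim: l => [|E l IH] //= hF.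
by rewrite dirac_neq ?IH; [ring|tauto|move=> e; apply: hF; left].
Qed.

Lemma lsum_dirac_le1 (F : nexp A) l : List.NoDup l -> lsum (dirac F) l <= 1.
Proof.
elim: l => [|E l IH] /= hl; first lra.
inversion hl as [|? ? hE hl']; subst.
case: (excluded_middle_informative (F = E)) => [eFE|hFE].
- by subst; rewrite dirac_refl lsum_dirac_notin //; lra.
- by rewrite dirac_neq //; have := IH hl'; lra.
Qed.

Lemma is_subd_dirac (E : nexp A) : is_subd (dirac E).
Proof. by split=> [F|l]; [exact: dirac_ge0|exact: lsum_dirac_le1]. Qed.

Lemma is_subd_le1 {x} E : is_subd x -> x E <= 1.
Proof.
move=> [_ h]; have /h : List.NoDup [:: E] by constructor; [done|constructor].
by rewrite /=; lra.
Qed.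

Lemma pstep_is_subd (P : pexp A) x : pstep P x -> is_subd x.
Proof.
elim=> [E|p hp P1 P2 y z _ [y0 y1] _ [z0 z1]]; first exact: is_subd_dirac.
split=> [E|l hl]; rewrite /sadd /sscale.
- by have := y0 E; have := z0 E; case: hp => *; nra.
- rewrite lsumD (lsumZ y) (lsumZ z).
  have := y1 l hl; have := z1 l hl; have := lsum_ge0 y l y0; have := lsum_ge0 z l z0.
  by case: hp => *; nra.
Qed.

Lemma nstep_is_subd {E : nexp A} {a x} : nstep E a x -> is_subd x.
Proof. by elim=> // ? ? ? /pstep_is_subd. Qed.

Lemma lsum_EFin x l : (lsum x l)%:E = (\sum_(E <- l) (x E)%:E)%E.
Proof. by elim: l => [|E l IH] /=; [rewrite big_nil|rewrite big_cons EFinD IH]. Qed.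

Lemma ser_lsum f l : (forall k E, 0 <= f k E) ->
  ser (fun k => lsum (f k) l) = (\sum_(E <- l) ser (fun k => f k E))%E.
Proof.
move=> f0; elim: l => [|E l IH] /=; first by rewrite big_nil; apply: ser0.
by rewrite big_cons -IH serD // => k; apply: lsum_ge0.
Qed.

Definition mix w f x : Prop := forall E, ser (fun k => w k * f k E) = (x E)%:E.

Definition mixture w f : subd A := fun E => fine (ser (fun k => w k * f k E)).

Lemma is_comb_mix {w f x} : is_comb w f x -> mix w f x.
Proof. by move=> h E; apply: ser_infinite_sum. Qed.

Lemma mix_is_comb {w f x} :
  (forall k E, 0 <= w k * f k E) -> mix w f x -> is_comb w f x.
Proof. by move=> t0 h E; apply: infinite_sum_ser. Qed.

Lemma mix_terms_ge0 {w f} : (forall k, 0 <= w k) ->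
  (forall k, 0 < w k -> is_subd (f k)) -> forall k E, 0 <= w k * f k E.
Proof. by move=> w0 fS k E; apply: mul_ge0_pos => // /fS []. Qed.

Lemma mix_ge0 {w f x} : (forall k E, 0 <= w k * f k E) -> mix w f x -> forall E, 0 <= x E.
Proof. by move=> t0 h E; have := ser_ge0 (t0^~ E); rewrite h lee_fin => /RleP. Qed.

Lemma mix_is_subd {w f x} : (forall k, 0 <= w k) -> (ser w <= 1%:E)%E ->
  (forall k, 0 < w k -> is_subd (f k)) -> mix w f x -> is_subd x.
Proof.
move=> w0 w1 fS hx; have t0 := mix_terms_ge0 w0 fS.
split=> [|l hl]; first exact: mix_ge0 t0 hx.
pose g k := w k * lsum (f k) l.
have hxg : (lsum x l)%:E = ser g.
  rewrite lsum_EFin; under eq_bigr => E _ do rewrite -hx.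
  by rewrite -ser_lsum //; apply: eq_ser => k; rewrite /g lsumZ.
suff hle : (ser g <= ser w)%E.
  by have := le_trans hle w1; rewrite -hxg lee_fin => /RleP.
apply: ser_le => k; rewrite /g; first by rewrite -lsumZ; apply: lsum_ge0 => E; apply: t0.
case: (Rle_lt_or_eq_dec _ _ (w0 k)) => [/[dup] /fS [_ /(_ l hl)] ? ?|<-]; nra.
Qed.

Lemma mix_closed {w f x} : (forall k, 0 <= w k) ->
  (forall k, 0 < w k -> forall E, f k E <> 0 -> closed E) ->
  mix w f x -> forall E, x E <> 0 -> closed E.
Proof.
move=> w0 fC hx E hE.
have /ser_neq0 [k hk] : ser (fun k => w k * f k E) <> 0%E.
  by rewrite hx => -[].
apply: (fC k); last by move=> e; rewrite e Rmult_0_r in hk.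
by case: (Rle_lt_or_eq_dec _ _ (w0 k)) => // e; rewrite -e Rmult_0_l in hk.
Qed.

Lemma mixtureP {w f} : (forall k, 0 <= w k) -> (ser w <= 1%:E)%E ->
  (forall k, 0 < w k -> is_subd (f k)) -> mix w f (mixture w f) /\ is_subd (mixture w f).
Proof.
move=> w0 w1 fS.
suff hm : mix w f (mixture w f) by split; last exact: mix_is_subd hm.
have t0 := mix_terms_ge0 w0 fS.
move=> E; apply: ser_fineK => [k|]; first exact: t0.
apply: le_trans w1; apply: ser_le => k; first exact: t0.
case: (Rle_lt_or_eq_dec _ _ (w0 k)) => [/[dup] /fS hf ?|<-]; last lra.
by have := is_subd_le1 E hf; have := hf.1 E; nra.
Qed.

Lemma mixture_subdS {w f} : (forall k, 0 <= w k) -> (ser w <= 1%:E)%E ->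
  (forall k, 0 < w k -> subdS (f k)) -> mix w f (mixture w f) /\ subdS (mixture w f).
Proof.
move=> w0 w1 fS; have [hm hs] := mixtureP w0 w1 (fun k hk => (fS k hk).1).
by do !split => //; apply: mix_closed hm => // k /fS [].
Qed.

Lemma mix_unique {w f x y} : mix w f x -> mix w f y -> x = y.
Proof. by move=> hx hy; apply/funext => E; move: (hx E); rewrite hy => -[]. Qed.

Lemma eq_mix {w f g x} : (forall k, 0 <= w k) -> (forall k, 0 < w k -> f k = g k) ->
  mix w f x -> mix w g x.
Proof.
move=> w0 fg hx E; rewrite -hx; apply: eq_ser => k.
by case: (Rle_lt_or_eq_dec _ _ (w0 k)) => [/fg ->|<-]; [|rewrite !Rmult_0_l].
Qed.

Lemma mix_sadd {w f g x y} :
  (forall k E, 0 <= w k * f k E) -> (forall k E, 0 <= w k * g k E) ->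
  mix w f x -> mix w g y -> mix w (fun k => sadd (f k) (g k)) (sadd x y).
Proof.
move=> f0 g0 hx hy E; rewrite /sadd EFinD -hx -hy -serD //.
by apply: eq_ser => k; rewrite Rmult_plus_distr_l.
Qed.

Lemma mix_uncurry (p : nat -> R) (W : nat -> nat -> R) (g : nat -> nat -> subd A)
    (m : nat -> subd A) x :
  (forall i, 0 <= p i) -> (forall i j, 0 <= W i j) -> (forall i j E, 0 <= g i j E) ->
  (forall i, 0 < p i -> mix (W i) (g i) (m i)) -> mix p m x ->
  mix (uncurry_nat (fun i j => p i * W i j)) (uncurry_nat g) x.
Proof.
move=> p0 W0 g0 hm hx E; rewrite -hx.
have t0 i j : 0 <= W i j * g i j E by apply: Rmult_le_pos.
apply: (@ser_uncurry_rows (fun i j => p i * W i j * g i j E)) => [i j|i].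
  by apply: Rmult_le_pos; [apply: Rmult_le_pos|].
case: (Rle_lt_or_eq_dec _ _ (p0 i)) => [hp|<-].
- under eq_ser => j do rewrite Rmult_assoc.
  by rewrite serZ // hm // EFinM.
- by rewrite Rmult_0_l; apply: ser0 => j; ring.
Qed.

Lemma mix_uncurry_rows (c : nat -> nat -> R) w f x :
  (forall k j, 0 <= c k j) -> (forall k E, 0 <= f k E) ->
  (forall k, ser (c k) = (w k)%:E) -> mix w f x ->
  mix (uncurry_nat c) (fun n => f (Cantor.of_nat n).1) x.
Proof.
move=> c0 f0 hc hx E; rewrite -hx.
apply: (@ser_uncurry_rows (fun k j => c k j * f k E)) => [k j|k].
  exact: Rmult_le_pos.
by rewrite (eq_ser (fun j => Rmult_comm _ _)) serZ // hc -EFinM Rmult_comm.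
Qed.

Lemma mix_uncurry_cols (c : nat -> nat -> R) q g z :
  (forall k j, 0 <= c k j) -> (forall j E, 0 <= g j E) ->
  (forall j, ser (fun k => c k j) = (q j)%:E) -> mix q g z ->
  mix (uncurry_nat c) (fun n => g (Cantor.of_nat n).2) z.
Proof.
move=> c0 g0 hc hz E; rewrite -hz.
apply: (@ser_uncurry_cols (fun k j => c k j * g j E)) => [k j|j].
  exact: Rmult_le_pos.
by rewrite (eq_ser (fun k => Rmult_comm _ _)) serZ // hc -EFinM Rmult_comm.
Qed.

End Mixtures.

Section FlatRepresentations.

Context {A : Type}.
Implicit Types (B : nexp A -> subd A -> Prop) (x y : subd A).

Set Implicit Arguments.
Record flat_repr B x y (w : nat -> R) (Es : nat -> nexp A) (Ys : nat -> subd A) : Prop :=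
  FlatRepr {
    repr_w_ge0 : forall k, 0 <= w k;
    repr_w_le1 : (ser w <= 1%:E)%E;
    repr_atom : forall k, 0 < w k -> B (Es k) (Ys k);
    repr_Ys_ge0 : forall k E, 0 <= Ys k E;
    repr_left : mix w (fun k => dirac (Es k)) x;
    repr_right : mix w Ys y }.
Unset Implicit Arguments.

Definition flat B x y : Prop := exists w Es Ys, flat_repr B x y w Es Ys.

Lemma flat_dirac B (E : nexp A) y : (forall F, 0 <= y F) -> B E y -> flat B (dirac E) y.
Proof.
move=> y0 hB; exists (fun k => if k is 0%nat then 1 else 0), (fun=> E), (fun=> y).
split=> [[|k]|||[|k]||] //=; try lra.
- by rewrite (ser_single 1) // lee_fin; apply/RleP; lra.
- by move=> F; apply: ser_single => [|n] /=; ring.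
- by move=> F; apply: ser_single => [|n] /=; ring.
Qed.

Lemma flat_mix B (p : nat -> R) (xs ys : nat -> subd A) x y :
  weights p -> (forall i, 0 < p i -> flat B (xs i) (ys i)) ->
  is_comb p xs x -> is_comb p ys y -> flat B x y.
Proof.
move=> /weightsP [p0 p1] hf /is_comb_mix hx /is_comb_mix hy.
have /choice [T hT] i : exists t : (nat -> R) * (nat -> nexp A) * (nat -> subd A),
    (0 < p i -> flat_repr B (xs i) (ys i) t.1.1 t.1.2 t.2) /\
    (forall k, 0 <= t.1.1 k) /\ (forall k E, 0 <= t.2 k E).
  case: (Rle_lt_or_eq_dec _ _ (p0 i)) => [/hf [w [Es [Ys h]]]|e].
  - by exists (w, Es, Ys); split=> [_|]; [|split; [exact: repr_w_ge0 h|exact: repr_Ys_ge0 h]].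
  - exists (fun=> 0, fun=> NNil, fun _ _ => 0).
    by split=> [hp|]; [exfalso; lra|split=> * /=; lra].
pose W i := (T i).1.1; pose Es i := (T i).1.2; pose Ys i := (T i).2.
have W0 i j : 0 <= W i j := (hT i).2.1 j.
have Y0 i j E : 0 <= Ys i j E := (hT i).2.2 j E.
exists (uncurry_nat (fun i j => p i * W i j)), (uncurry_nat Es), (uncurry_nat Ys); split.
- by move=> n; apply: Rmult_le_pos.
- apply: le_trans p1; apply: ser_uncurry_le => [i j|//|i]; first exact: Rmult_le_pos.
  case: (Rle_lt_or_eq_dec _ _ (p0 i)) => [hp|<-].
  + rewrite serZ // -[X in (_ <= X)%E]mule1; apply: lee_wpmul2l.
      by rewrite lee_fin -R0E; apply/RleP; lra.
    exact: repr_w_le1 ((hT i).1 hp).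
  + by rewrite ser0 // => j; ring.
- move=> n; rewrite /uncurry_nat; set i := (Cantor.of_nat n).1; set j := (Cantor.of_nat n).2.
  move=> hn; have hp : 0 < p i by apply: Rnot_le_lt => hp; have := W0 i j; nra.
  have hW : 0 < W i j by have := p0 i; nra.
  exact: repr_atom ((hT i).1 hp) _ hW.
- by move=> n; apply: Y0.
- apply: (@mix_uncurry _ p W (fun i j => dirac (Es i j)) xs) => // [i j E|i hp].
    exact: dirac_ge0.
  exact: repr_left ((hT i).1 hp).
- apply: (@mix_uncurry _ p W Ys ys) => // i hp.
  exact: repr_right ((hT i).1 hp).
Qed.

Definition lift_atom (Rel : nexp A -> nexp A -> Prop) (F : nexp A) (y : subd A) : Prop :=
  exists E, y = dirac E /\ Rel F E.

Definition step_atom (a : A) (E : nexp A) (y : subd A) : Prop :=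
  closed E /\ nstep E a y.

Lemma lift_flat {Rel x y} : lift Rel x y -> flat (lift_atom Rel) x y.
Proof.
elim=> [F E hFE|p xs ys x' y' hw _ IH hx hy]; last exact: flat_mix hw IH hx hy.
by apply: flat_dirac; [exact: dirac_ge0|exists E].
Qed.

Lemma cstep_flat {x a y} : cstep x a y -> flat (step_atom a) x y.
Proof.
elim=> [E a' y' hE hs|a' p xs ys x' y' hw _ IH hx hy]; last exact: flat_mix hw IH hx hy.
by apply: flat_dirac; [exact: (nstep_is_subd hs).1|split].
Qed.

Lemma flat_subdS_l {B x y} :
  (forall E Y, B E Y -> closed E) -> flat B x y -> subdS x.
Proof.
move=> hC [w [Es [Ys h]]]; have w0 := repr_w_ge0 h.
split.
  apply: mix_is_subd (repr_left h) => //; first exact: repr_w_le1 h.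
  by move=> k _; exact: is_subd_dirac.
apply: mix_closed (repr_left h) => // k hk E.
case: (excluded_middle_informative (Es k = E)) => [<- _|/dirac_neq //].
exact: hC _ _ (repr_atom h _ hk).
Qed.

Lemma flat_is_subd_r {B x y} :
  (forall E Y, B E Y -> is_subd Y) -> flat B x y -> is_subd y.
Proof.
move=> hS [w [Es [Ys h]]]; apply: mix_is_subd (repr_right h).
- exact: repr_w_ge0 h.
- exact: repr_w_le1 h.
- by move=> k /(repr_atom h) /hS.
Qed.

Lemma cstep_is_subd {x a y} : cstep x a y -> is_subd x /\ is_subd y.
Proof.
move/cstep_flat=> h; split.
  by case: (flat_subdS_l (fun E Y (hB : step_atom a E Y) => hB.1) h).
by apply: flat_is_subd_r h => E Y [_ /nstep_is_subd].
Qed.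

Lemma lift_subdS_l {Rel x y} :
  (forall F E, Rel F E -> closed F) -> lift Rel x y -> subdS x.
Proof. by move=> hC /lift_flat; apply: flat_subdS_l => F Y [E [_ /hC]]. Qed.

End FlatRepresentations.

Section Coupling.

Context {A : Type}.
Implicit Types (w q : nat -> R) (Es Gs : nat -> nexp A) (x y z : subd A).

Lemma mix_dirac_le {w Es x} k : (forall k, 0 <= w k) ->
  mix w (fun k => dirac (Es k)) x -> w k <= x (Es k).
Proof.
move=> w0 hx; have t0 n : 0 <= w n * dirac (Es n) (Es k).
  by apply: Rmult_le_pos; [|exact: dirac_ge0].
by have := ser_term_le k t0; rewrite hx dirac_refl Rmult_1_r lee_fin => /RleP.
Qed.

Lemma coupling_marginal {w q Es Gs x} k :
  (forall k, 0 <= w k) -> (forall j, 0 <= q j) ->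
  mix w (fun k => dirac (Es k)) x -> mix q (fun j => dirac (Gs j)) x ->
  ser (fun j => w k / x (Es k) * (q j * dirac (Gs j) (Es k))) = (w k)%:E.
Proof.
move=> w0 q0 hw hq.
rewrite serZ => [|j]; last by apply: Rmult_le_pos; [|exact: dirac_ge0].
rewrite hq -EFinM -RmultE; congr EFin.
have := mix_dirac_le k w0 hw; have := w0 k.
case: (Req_dec (x (Es k)) 0) => [->|hm] *; last by field.
by rewrite Rmult_0_r; lra.
Qed.

(* When [x(E_k) = 0] also [w_k = 0] by [mix_dirac_le], so the junk value of [/ 0]
   in the witness does no harm. *)
Lemma dirac_mix_coupling {w q Es Gs x} :
  (forall k, 0 <= w k) -> (forall j, 0 <= q j) ->
  mix w (fun k => dirac (Es k)) x -> mix q (fun j => dirac (Gs j)) x ->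
  exists c : nat -> nat -> R, (forall k j, 0 <= c k j) /\
    (forall k, ser (c k) = (w k)%:E) /\ (forall j, ser (fun k => c k j) = (q j)%:E) /\
    (forall k j, 0 < c k j -> Es k = Gs j).
Proof.
move=> w0 q0 hw hq.
exists (fun k j => w k / x (Es k) * (q j * dirac (Gs j) (Es k))); split; [|split; [|split]].
- move=> k j; apply: Rmult_le_pos; last by apply: Rmult_le_pos; [|exact: dirac_ge0].
  have := mix_dirac_le k w0 hw; have := w0 k.
  case: (Req_dec (x (Es k)) 0) => [->|hm] *; first by rewrite /Rdiv Rinv_0 Rmult_0_r; lra.
  by apply: Rmult_le_pos; [lra|left; apply: Rinv_0_lt_compat; lra].
- by move=> k; apply: coupling_marginal.
- move=> j; rewrite -(coupling_marginal j q0 w0 hq hw); apply: eq_ser => k.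
  case: (excluded_middle_informative (Gs j = Es k)) => [-> | hne].
    by rewrite dirac_refl /Rdiv; ring.
  by rewrite !dirac_neq //; [ring|move=> e; apply: hne].
- move=> k j; case: (excluded_middle_informative (Es k = Gs j)) => // hne.
  by rewrite dirac_neq ?Rmult_0_r; [lra|move=> e; apply: hne].
Qed.

Lemma flat_comp {Rel B x y z} : flat (lift_atom Rel) x y -> flat B y z ->
  flat (fun F Z => exists E, Rel F E /\ B E Z) x z.
Proof.
move=> [w [Fs [Ys hx]]] [q [Gs [Zs hy]]].
have w0 := repr_w_ge0 hx; have q0 := repr_w_ge0 hy.
have /choice [Es hEs] k : exists E, 0 < w k -> Ys k = dirac E /\ Rel (Fs k) E.
  case: (Rle_lt_or_eq_dec _ _ (w0 k)) => [/(repr_atom hx) [E hE]|e]; first by exists E.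
  by exists NNil => hk; exfalso; lra.
have hyE : mix w (fun k => dirac (Es k)) y.
  by apply: eq_mix (repr_right hx) => // k /hEs [].
have [c [c0 [crow [ccol csupp]]]] := dirac_mix_coupling w0 q0 hyE (repr_left hy).
exists (uncurry_nat c), (fun n => Fs (Cantor.of_nat n).1), (fun n => Zs (Cantor.of_nat n).2).
split.
- by move=> n; apply: c0.
- by rewrite (ser_uncurry_rows c0 crow); exact: repr_w_le1 hx.
- move=> n; rewrite /uncurry_nat; set k := (Cantor.of_nat n).1; set j := (Cantor.of_nat n).2.
  move=> hc; exists (Es k); split; first exact: (hEs k (ser_pos j (c0 k) (crow k) hc)).2.
  by rewrite (csupp _ _ hc); apply: repr_atom hy _ (ser_pos k (c0^~ j) (ccol j) hc).
- by move=> n E; exact: repr_Ys_ge0 hy _ _.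
- apply: (@mix_uncurry_rows _ c w (fun k => dirac (Fs k))) => // [k E|].
    exact: dirac_ge0.
  exact: repr_left hx.
- exact: mix_uncurry_cols c0 (repr_Ys_ge0 hy) ccol (repr_right hy).
Qed.

End Coupling.

Section WeakTransitions.

Context {A : Type}.
Implicit Types (tau a : A) (c : nat -> R) (x y z : subd A) (xs ys zs : nat -> subd A).

Definition derivation tau x z (mto mx : nat -> subd A) : Prop :=
  (forall i, subdS (mto i) /\ subdS (mx i)) /\
  (forall i, cstep (mto i) tau (sadd (mto (S i)) (mx (S i)))) /\
  x = sadd (mto 0%nat) (mx 0%nat) /\
  (forall E, infinite_sum (fun i => mx i E) (z E)).

Lemma mix_series c (f : nat -> nat -> subd A) ys zs z :
  (forall n, 0 <= c n) -> (forall n, 0 < c n -> forall i E, 0 <= f n i E) ->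
  (forall n, 0 < c n -> forall E, infinite_sum (fun i => f n i E) (zs n E)) ->
  (forall i, mix c (fun n => f n i) (ys i)) -> mix c zs z ->
  forall E, infinite_sum (fun i => ys i E) (z E).
Proof.
move=> c0 f0 hf hy hz E.
have t0 n i F : 0 <= c n * f n i F by apply: mul_ge0_pos => // /f0.
apply: infinite_sum_ser => [i|]; first exact: mix_ge0 (fun n => t0 n i) (hy i) E.
pose g i n := c n * f n i E.
have -> : ser (fun i => ys i E) = (\sum_(i <oo) ser (g i))%E.
  by symmetry; apply: eseries_ser => i; rewrite (hy i E).
rewrite ser_interchange => [|i n]; last exact: t0.
rewrite -hz; apply: eseries_ser => n; rewrite /g.
case: (Rle_lt_or_eq_dec _ _ (c0 n)) => [hc|<-].
- by rewrite serZ => [|i]; [rewrite (ser_infinite_sum (hf n hc E))|exact: f0].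
- by rewrite Rmult_0_l; apply: ser0 => i; ring.
Qed.

Lemma derivation_mix tau c xs zs x z (Dt Dx : nat -> nat -> subd A) :
  (forall n, 0 <= c n) -> (ser c <= 1%:E)%E ->
  (forall n, 0 < c n -> derivation tau (xs n) (zs n) (Dt n) (Dx n)) ->
  mix c xs x -> mix c zs z ->
  derivation tau x z (fun i => mixture c (Dt^~ i)) (fun i => mixture c (Dx^~ i)).
Proof.
move=> c0 c1 hD hx hz.
have hT i := mixture_subdS c0 c1 (fun n hn => ((hD n hn).1 i).1).
have hX i := mixture_subdS c0 c1 (fun n hn => ((hD n hn).1 i).2).
have tT i := mix_terms_ge0 c0 (fun n hn => ((hD n hn).1 i).1.1).
have tX i := mix_terms_ge0 c0 (fun n hn => ((hD n hn).1 i).2.1).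
have hstep i := mix_sadd (tT (S i)) (tX (S i)) (hT (S i)).1 (hX (S i)).1.
split; [|split; [|split]].
- by move=> i; split; [exact: (hT i).2|exact: (hX i).2].
- move=> i; apply: (@cs_comb _ tau c (Dt^~ i) (fun n => sadd (Dt n (S i)) (Dx n (S i)))).
  + exact/weightsP.
  + by move=> n /hD [_ []].
  + exact: mix_is_comb (tT i) (hT i).1.
  + apply: (mix_is_comb _ (hstep i)) => n E; rewrite /sadd Rmult_plus_distr_l.
    by apply: Rplus_le_le_0_compat; [exact: tT|exact: tX].
- apply: mix_unique hx _.
  apply: eq_mix (mix_sadd (tT 0%nat) (tX 0%nat) (hT 0%nat).1 (hX 0%nat).1) => //.
  by move=> n /hD [_ [_ []]].
- apply: (@mix_series c Dx _ zs z c0 _ _ (fun i => (hX i).1) hz) => n /hD [hS [_ [_ hsum]]] //.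
  by move=> i; exact: (hS i).2.1.1.
Qed.

Lemma wtr_mix tau c xs zs x z : (forall n, 0 <= c n) -> (ser c <= 1%:E)%E ->
  (forall n, 0 < c n -> wtr tau (xs n) (zs n)) -> mix c xs x -> mix c zs z -> wtr tau x z.
Proof.
move=> c0 c1 hw hx hz.
have /choice [D hD] n : exists D : (nat -> subd A) * (nat -> subd A),
    0 < c n -> derivation tau (xs n) (zs n) D.1 D.2.
  case: (Rle_lt_or_eq_dec _ _ (c0 n)) => [/hw [mto [mx h]]|e]; first by exists (mto, mx).
  by exists (xs, xs) => hn; exfalso; lra.
do 2 eexists.
exact: (@derivation_mix tau c xs zs x z (fun n => (D n).1) (fun n => (D n).2) c0 c1 hD hx hz).
Qed.

Lemma wtra_mix tau a c xs ys x y : (forall n, 0 <= c n) -> (ser c <= 1%:E)%E ->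
  (forall n, 0 < c n -> wtra tau (xs n) a (ys n)) -> mix c xs x -> mix c ys y ->
  wtra tau x a y.
Proof.
move=> c0 c1 hw hx hy.
have /choice [D hD] n : exists D : subd A * subd A,
    0 < c n -> wtr tau (xs n) D.1 /\ cstep D.1 a D.2 /\ wtr tau D.2 (ys n).
  case: (Rle_lt_or_eq_dec _ _ (c0 n)) => [/hw [y1 [y2 h]]|e]; first by exists (y1, y2).
  by exists (x, x) => hn; exfalso; lra.
have hS n : 0 < c n -> is_subd (D n).1 /\ is_subd (D n).2.
  by move/hD => [_ [/cstep_is_subd]].
have [h1 _] := mixtureP c0 c1 (fun n hn => (hS n hn).1).
have [h2 _] := mixtureP c0 c1 (fun n hn => (hS n hn).2).
exists (mixture c (fun n => (D n).1)), (mixture c (fun n => (D n).2)); split; [|split].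
- by apply: wtr_mix c0 c1 _ hx h1 => n /hD [].
- apply: (@cs_comb _ a c (fun n => (D n).1) (fun n => (D n).2)).
  + exact/weightsP.
  + by move=> n /hD [_ []].
  + exact: mix_is_comb (mix_terms_ge0 c0 (fun n hn => (hS n hn).1)) h1.
  + exact: mix_is_comb (mix_terms_ge0 c0 (fun n hn => (hS n hn).2)) h2.
- by apply: wtr_mix c0 c1 _ h2 hy => n /hD [_ []].
Qed.

Lemma flat_wtra_lift {tau a B x z} :
  (forall F Z, B F Z -> exists V, wtra tau (dirac F) a V /\ lift (wbis tau) V Z) ->
  flat B x z -> exists x', subdS x' /\ wtra tau x a x' /\ lift (wbis tau) x' z.
Proof.
move=> hB [c [Fs [Zs h]]]; have c0 := repr_w_ge0 h; have c1 := repr_w_le1 h.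
have /choice [V hV] n : exists V,
    0 < c n -> wtra tau (dirac (Fs n)) a V /\ lift (wbis tau) V (Zs n).
  case: (Rle_lt_or_eq_dec _ _ (c0 n)) => [/(repr_atom h) /hB [V hV]|e]; first by exists V.
  by exists x => hn; exfalso; lra.
have wbis_closed F E : wbis tau F E -> closed F by move=> [Rel [[hC _] /hC []]].
have hVS n : 0 < c n -> subdS (V n) by move/hV => [_ /(lift_subdS_l wbis_closed)].
have [hmix hS] := mixture_subdS c0 c1 hVS.
exists (mixture c V); split; [done|split].
- by apply: wtra_mix c0 c1 _ (repr_left h) hmix => n /hV [].
- apply: (@l_comb _ _ c V Zs).
  + exact/weightsP.
  + by move=> n /hV [].
  + exact: mix_is_comb (mix_terms_ge0 c0 (fun n hn => (hVS n hn).1)) hmix.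
  + exact: mix_is_comb (fun n E => Rmult_le_pos _ _ (c0 n) (repr_Ys_ge0 h n E)) (repr_right h).
Qed.

End WeakTransitions.

Theorem mainTheorem13 (A : Type) (tau : A) (mu mu' nu : subd A) (a : A) :
  subdS mu -> subdS mu' -> subdS nu ->
  lift (wcong tau) nu mu ->
  cstep mu a mu' ->
  exists nu', subdS nu' /\ wtra tau nu a nu' /\ lift (wbis tau) nu' mu'.
Proof.
move=> _ _ _ hlift hstep.
apply: (flat_wtra_lift _ (flat_comp (lift_flat hlift) (cstep_flat hstep))).
by move=> F Z [E [[_ [_ [_ hback]]] [_ /hback]]].
Qed.
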